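(* Let $A\in\mathbb{R}^{n\times n}$ be Metzler and Hurwitz stable, let $b_0\in\mathbb{R}^n_{\ge0}$, let $\mu,\theta,\eta,k_i,k_p>0$, and set $r:=\mu/\theta$, $g_1:=-e_n^TA^{-1}e_1$, $g_n:=-e_n^TA^{-1}e_n$, $g_0:=-e_n^TA^{-1}b_0$. Assume $g_1\neq0$. Consider the closed-loop system $$\dot x=Ax+k_iz_1e_1-k_px_nz_2e_n+b_0,\qquad \dot z_1=\mu-\eta z_1z_2,\qquad \dot z_2=\theta x_n-\eta z_1z_2,$$ with $x\in\mathbb{R}^n$, $z_1,z_2\in\mathbb{R}$. Then the polynomial $$P_1(z):=\eta g_1k_iz^2+(g_0-r)\eta z-g_nk_p\mu r$$ has exactly one positive root $z_1^*$, and the system has exactly one equilibrium $(x^*,z_1^*,z_2^* )$ with $z_1^*>0$; it is given by $x^*_n=r$, $$z_2^*=\frac{\mu}{\eta z_1^*},\qquad x^*=-A^{-1}\Big(k_iz_1^*e_1-\frac{k_p r\mu}{\eta z_1^*}e_n+b_0\Big).$$ Equivalently, $z_1^*=\mu/(\eta z_2^* )$ where $z_2^*$ is the unique positive root of $P_2(z):=-\eta g_nk_prz^2+(g_0-r)\eta z+g_1k_i\mu$.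
   Context: $e_1,\dots,e_n$ is the standard basis of $\mathbb{R}^n$ and $x_n=e_n^Tx$. A real square matrix is Metzler if all its off-diagonal entries are nonnegative, and Hurwitz stable if all its eigenvalues have negative real part. *)

From HB Require Import structures.
From mathcomp Require Import all_boot all_order all_algebra.
From mathcomp Require Import complex.
Set Implicit Arguments. Unset Strict Implicit. Unset Printing Implicit Defensive.
Import Order.TTheory GRing.Theory Num.Theory.
Local Open Scope ring_scope.

(* Real numbers: an arbitrary real closed field R (covers R = the reals).
   Indices: R^(n+1) with e_1 = ord0 and e_{n+1} = ord_max, i.e. the
   paper's dimension n is written here as n.+1 (the paper needs n >= 1). *)

Definition metzler (R : rcfType) (n : nat) (A : 'M[R]_n) : Prop :=
  forall i j : 'I_n, i != j -> 0 <= A i j.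

Definition hurwitz (R : rcfType) (n : nat) (A : 'M[R]_n) : Prop :=
  forall l : R[i], eigenvalue (map_mx (real_complex R) A) l -> Re l < 0.

Definition evec {R : rcfType} {n : nat} (i : 'I_n) : 'cV[R]_n :=
  \col_(j < n) (if j == i then 1 else 0).

Definition cl_field (R : rcfType) (n : nat) (A : 'M[R]_n.+1) (b0 : 'cV[R]_n.+1)
  (mu theta eta ki kp : R) (x : 'cV[R]_n.+1) (z1 z2 : R)
  : 'cV[R]_n.+1 * R * R :=
  (A *m x + (ki * z1) *: evec ord0 - (kp * x ord_max 0 * z2) *: evec ord_max + b0,
   mu - eta * z1 * z2,
   theta * x ord_max 0 - eta * z1 * z2).

Definition is_equilibrium (R : rcfType) (n : nat) (A : 'M[R]_n.+1) (b0 : 'cV[R]_n.+1)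
  (mu theta eta ki kp : R) (x : 'cV[R]_n.+1) (z1 z2 : R) : Prop :=
  cl_field A b0 mu theta eta ki kp x z1 z2 = (0, 0, 0).

From HB Require Import structures.
From mathcomp Require Import all_boot all_order all_algebra.
From mathcomp Require Import complex polyrcf.
From mathcomp Require Import ring lra.
Import Order.TTheory GRing.Theory Num.Theory.
Set Implicit Arguments. Unset Strict Implicit. Unset Printing Implicit Defensive.
Local Open Scope ring_scope.

(* The key linear-algebra fact is that for A Metzler and Hurwitz, -A^-1 is
   entrywise nonnegative with a positive diagonal, so that the static gains
   g1 = -A^-1_{n1} and gn = -A^-1_{nn} are positive.  We prove it by a
   continuation argument on the resolvent (t I - A)^-1:
   - a Z-matrix M with M v > 0 for some v > 0 has a nonnegative inverse;
     hence (t I - A)^-1 >= 0 for t large, and this persists slightly to the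
     left of any t where it holds;
   - for t >= 0 the Hurwitz property gives det (t I - A) > 0, so the sign of
     (t I - A)^-1 is that of the polynomial entries of adj (x I - A), which
     can only change at finitely many roots; sweeping t down to 0 past these
     roots one at a time gives -A^-1 = (0 I - A)^-1 >= 0.
   With g1, gn > 0 the polynomial P1 has positive leading coefficient and
   negative constant term, hence exactly one positive root.  Eliminating z2
   and x from the equilibrium equations leaves x_n = mu / theta, which is
   P1(z1) = 0; finally z |-> mu / (eta z) maps the positive root of P1 to
   the positive root of P2. *)

Lemma sumr_ge_term (R : numDomainType) m (F : 'I_m -> R) i :
  (forall j, 0 <= F j) -> F i <= \sum_j F j.
Proof. by move=> F_ge0; rewrite (bigD1 i) //= lerDl sumr_ge0. Qed.

Lemma mulmx_ge0 (R : numDomainType) m n p (P : 'M[R]_(m, n)) (Q : 'M[R]_(n, p)) :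
  (forall i j, 0 <= P i j) -> (forall i j, 0 <= Q i j) ->
  forall i j, 0 <= (P *m Q) i j.
Proof. by move=> P_ge0 Q_ge0 i j; rewrite mxE sumr_ge0 // => k _; rewrite mulr_ge0. Qed.

Lemma invmx_mul (R : comUnitRingType) m (P N : 'M[R]_m) :
  P \in unitmx -> N \in unitmx -> invmx (P *m N) = invmx N *m invmx P.
Proof.
move=> P_unit N_unit; have PN_unit : P *m N \in unitmx by rewrite unitmx_mul P_unit.
have PN_inv : (P *m N) *m (invmx N *m invmx P) = 1%:M.
  by rewrite -mulmxA (mulmxA N) mulmxV // mul1mx mulmxV.
by rewrite -[LHS]mulmx1 -PN_inv mulmxA mulVmx // mul1mx.
Qed.

Section ZMatrix.
Variables (R : realFieldType) (m : nat) (M : 'M[R]_m) (v : 'cV[R]_m).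
Hypothesis M_offdiag_le0 : forall i j, i != j -> M i j <= 0.
Hypothesis v_gt0 : forall i, 0 < v i 0.
Hypothesis Mv_gt0 : forall i, 0 < (M *m v) i 0.

(* Minimum principle: M x >= 0 forces x >= 0.  If c, the least ratio
   x_i / v_i, were negative, then at an index i0 realising it,
   (M x)_i0 = c (M v)_i0 + sum_j M_i0j (x_j - c v_j) < 0. *)
Lemma zmatrix_min_principle (x : 'cV[R]_m) :
  (forall i, 0 <= (M *m x) i 0) -> forall i, 0 <= x i 0.
Proof.
move=> Mx_ge0 i1; rewrite leNgt; apply/negP => x_i1_lt0.
case: (@arg_minP _ _ _ i1 predT (fun i => x i 0 / v i 0) isT) => i0 _ i0_min.
set c := x i0 0 / v i0 0.
have c_lt0 : c < 0.
  by apply: le_lt_trans (i0_min i1 isT) _; rewrite pmulr_llt0 ?invr_gt0.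
have shifted_ge0 j : 0 <= x j 0 - c * v j 0.
  by rewrite subr_ge0 -ler_pdivlMr //; exact: i0_min.
have Mx_split : (M *m x) i0 0 = c * (M *m v) i0 0
                                + \sum_j M i0 j * (x j 0 - c * v j 0).
  by rewrite !mxE mulr_sumr -big_split /=; apply: eq_bigr => j _; ring.
have rest_le0 : \sum_j M i0 j * (x j 0 - c * v j 0) <= 0.
  apply: sumr_le0 => j _; case: (eqVneq i0 j) => [<-|i0j].
    by rewrite /c divfK ?subrr ?mulr0 // gt_eqF.
  by rewrite mulr_le0_ge0 ?M_offdiag_le0.
have : c * (M *m v) i0 0 < 0 by rewrite nmulr_rlt0.
by have := Mx_ge0 i0; rewrite Mx_split; lra.
Qed.

(* M is invertible (its kernel is trivial by the minimum principle applied
   to x and -x) and each column of its inverse is nonnegative. *)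
Lemma zmatrix_inv_ge0 : M \in unitmx /\ forall i j, 0 <= invmx M i j.
Proof.
have M_unit : M \in unitmx.
  rewrite unitmxE unitfE -det_tr; apply/negP => /det0P [w w_neq0 wM0].
  have Mx0 : M *m w^T = 0 by rewrite -[M]trmxK -trmx_mul wM0 trmx0.
  have x_ge0 := zmatrix_min_principle (x := w^T).
  have Nx_ge0 := zmatrix_min_principle (x := - w^T).
  move: w_neq0; rewrite -[w]trmxK; suff -> : w^T = 0 by rewrite trmx0 eqxx.
  apply/matrixP => i j; rewrite (ord1 j) [RHS]mxE.
  have := x_ge0 (fun k => ltac:(by rewrite Mx0 mxE)) i.
  have := Nx_ge0 (fun k => ltac:(by rewrite mulmxN Mx0 oppr0 mxE)) i.
  by rewrite [X in 0 <= X -> _]mxE; lra.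
split=> // i j.
have Mcol_ge0 k : 0 <= (M *m col j (invmx M)) k 0.
  by rewrite colE mulmxA mulmxV // mul1mx mxE ler0n.
by have := zmatrix_min_principle Mcol_ge0 i; rewrite mxE.
Qed.

End ZMatrix.

Definition resolvent_ge0 (R : realFieldType) m (A : 'M[R]_m) (t : R) : Prop :=
  (t%:M - A) \in unitmx /\ forall i j, 0 <= invmx (t%:M - A) i j.

(* If B is nonnegative off the diagonal and all its row sums are below t,
   then t I - B is a Z-matrix with (t I - B) 1 > 0, hence an M-matrix. *)
Lemma resolvent_ge0_rowsum (R : realFieldType) m (B : 'M[R]_m) (t : R) :
  (forall i j, i != j -> 0 <= B i j) -> (forall i, \sum_j B i j < t) ->
  resolvent_ge0 B t.
Proof.
move=> B_offdiag_ge0 rowsum_lt; apply: (@zmatrix_inv_ge0 _ _ _ (const_mx 1)).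
- by move=> i j ij; rewrite !mxE (negPf ij) mulr0n sub0r oppr_le0 B_offdiag_ge0.
- by move=> i; rewrite mxE ltr01.
move=> i; rewrite mxE; under eq_bigr => j _ do rewrite !mxE mulr1.
rewrite sumrB (bigD1 i) //= eqxx mulr1n big1 ?addr0 ?subr_gt0 // => j ji.
by rewrite eq_sym (negPf ji) mulr0n.
Qed.

Lemma resolvent_ge0_large (R : rcfType) m (A : 'M[R]_m) (t : R) : metzler A ->
  1 + \sum_i \sum_j `|A i j| <= t -> resolvent_ge0 A t.
Proof.
move=> A_metzler t_large; apply: resolvent_ge0_rowsum => // i.
have row_le : \sum_j A i j <= \sum_j `|A i j| by apply: ler_sum => j _; exact: ler_norm.
have row_le_total : \sum_j `|A i j| <= \sum_k \sum_j `|A k j|.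
  by apply: (sumr_ge_term (F := fun k => \sum_j `|A k j|)) => k; apply: sumr_ge0.
lra.
Qed.

(* Nonnegativity of the resolvent propagates a little to the left:
   for s = t - d we have s I - A = (t I - A)(I - d (t I - A)^-1), and the
   second factor is an M-matrix as long as d is small. *)
Lemma resolvent_ge0_left (R : realFieldType) m (A : 'M[R]_m) (t : R) :
  resolvent_ge0 A t ->
  exists2 e, 0 < e & forall s, t - e <= s -> s <= t -> resolvent_ge0 A s.
Proof.
move=> [tA_unit S_ge0]; set S := invmx (t%:M - A).
set K := \sum_i \sum_j S i j.
have K_ge0 : 0 <= K by apply: sumr_ge0 => i _; apply: sumr_ge0.
exists (K + 1)^-1; first by rewrite invr_gt0; lra.
move=> s s_lo s_hi; set d := t - s.
have dK_lt1 : d * K < 1.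
  have : d * (K + 1) <= 1 by rewrite -ler_pdivlMr; [rewrite /d; lra|lra].
  by rewrite /d; nra.
have [N_unit N_ge0] : resolvent_ge0 (d *: S) 1.
  apply: resolvent_ge0_rowsum => [i j _|i]; first by rewrite mxE mulr_ge0 ?S_ge0 // /d; lra.
  under eq_bigr => j _ do rewrite mxE; rewrite -mulr_sumr.
  have rowS_le : \sum_j S i j <= K.
    by apply: (sumr_ge_term (F := fun k => \sum_j S k j)) => k; apply: sumr_ge0.
  by rewrite /d in dK_lt1 *; nra.
have factor : s%:M - A = (t%:M - A) *m (1%:M - d *: S).
  rewrite mulmxBr mulmx1 -scalemxAr mulmxV // scalemx1 addrAC -raddfB /=.
  by rewrite /d opprB addrCA subrr addr0.
split; first by rewrite factor unitmx_mul tA_unit.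
by rewrite factor invmx_mul //; apply: mulmx_ge0.
Qed.

Lemma char_poly_mx_eval (R : comNzRingType) m (A : 'M[R]_m) (t : R) :
  map_mx (horner_eval t) (char_poly_mx A) = t%:M - A.
Proof.
apply/matrixP => i j.
by rewrite !mxE horner_evalE hornerD hornerN hornerMn hornerX hornerC.
Qed.

Lemma horner_char_poly (R : comNzRingType) m (A : 'M[R]_m) (t : R) :
  (char_poly A).[t] = \det (t%:M - A).
Proof. by rewrite -char_poly_mx_eval det_map_mx /= horner_evalE. Qed.

Lemma horner_adj_char_poly_mx (R : comNzRingType) m (A : 'M[R]_m) (t : R) i j :
  ((\adj (char_poly_mx A)) i j).[t] = \adj (t%:M - A) i j.
Proof. by rewrite -char_poly_mx_eval -map_mx_adj [RHS]mxE. Qed.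

Lemma hurwitz_char_poly_noroot (R : rcfType) m (A : 'M[R]_m) (t : R) :
  hurwitz A -> 0 <= t -> ~~ root (char_poly A) t.
Proof.
move=> A_hurwitz t_ge0; apply/negP => /(rmorph_root (real_complex R)).
rewrite map_char_poly -eigenvalue_root_char => /A_hurwitz.
by rewrite -complexRe ltcE /= => /andP [_]; rewrite ltNge t_ge0.
Qed.

(* Hence det (t I - A) > 0 for t >= 0: the monic characteristic polynomial
   is positive at infinity and cannot change sign on [0, +oo[. *)
Lemma hurwitz_det_gt0 (R : rcfType) m (A : 'M[R]_m) (t : R) :
  hurwitz A -> 0 <= t -> 0 < \det (t%:M - A).
Proof.
move=> A_hurwitz t_ge0; rewrite -horner_char_poly.
have lc_gt0 : 0 < lead_coef (char_poly A).
  by rewrite (monicP (char_poly_monic A)) ltr01.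
have [N N_large] := poly_pinfty_gt_lc lc_gt0.
have far_ge : lead_coef (char_poly A) <= (char_poly A).[Num.max t N].
  by apply: N_large; rewrite le_max lexx orbT.
rewrite ltNge; apply/negP => at_t_le0.
have [y /andP [t_le_y _] y_root] := @polyrcf.poly_ivt _ (char_poly A) t (Num.max t N)
  (ltac:(by rewrite le_max lexx))
  (mulr_le0_ge0 at_t_le0 (le_trans (ltW lc_gt0) far_ge)).
by have := hurwitz_char_poly_noroot A_hurwitz (le_trans t_ge0 t_le_y); rewrite y_root.
Qed.

Definition adj_ge0 (R : rcfType) m (A : 'M[R]_m) (t : R) : Prop :=
  forall i j, 0 <= ((\adj (char_poly_mx A)) i j).[t].

(* On [0, +oo[ the determinant is positive, so by Cramer's rule the
   resolvent is nonnegative exactly when the adjugate polynomials are. *)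
Lemma resolvent_ge0_adjE (R : rcfType) m (A : 'M[R]_m) (t : R) :
  hurwitz A -> 0 <= t -> resolvent_ge0 A t <-> adj_ge0 A t.
Proof.
move=> A_hurwitz t_ge0; have det_gt0 := hurwitz_det_gt0 A_hurwitz t_ge0.
have tA_unit : (t%:M - A) \in unitmx by rewrite unitmxE unitfE gt_eqF.
have cramer i j :
    invmx (t%:M - A) i j = (\det (t%:M - A))^-1 * \adj (t%:M - A) i j.
  by rewrite /invmx tA_unit mxE.
split=> [[_ inv_ge0] i j|adj_nonneg]; last first.
  split=> // i j; rewrite cramer -horner_adj_char_poly_mx.
  by rewrite mulr_ge0 ?adj_nonneg // invr_ge0 ltW.
by have := inv_ge0 i j; rewrite cramer pmulr_rge0 ?invr_gt0 // horner_adj_char_poly_mx.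
Qed.

Definition adj_roots_poly (R : idomainType) m (A : 'M[R]_m) : {poly R} :=
  \prod_(k : 'I_m * 'I_m)
     (if (\adj (char_poly_mx A)) k.1 k.2 == 0 then 1
      else (\adj (char_poly_mx A)) k.1 k.2).

Lemma adj_roots_poly_neq0 (R : idomainType) m (A : 'M[R]_m) : adj_roots_poly A != 0.
Proof.
rewrite prodf_seq_neq0; apply/allP => k _ /=.
by case: ifP => [_|/negbT]; rewrite ?oner_neq0.
Qed.

Lemma adj_roots_poly_root (R : idomainType) m (A : 'M[R]_m) i j (x : R) :
  (\adj (char_poly_mx A)) i j != 0 -> root ((\adj (char_poly_mx A)) i j) x ->
  root (adj_roots_poly A) x.
Proof.
move=> q_neq0 /eqP q_x0; rewrite rootE horner_prod (bigD1 (i, j)) //=.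
by rewrite (negPf q_neq0) q_x0 mul0r.
Qed.

Lemma poly_ge0_noroot (R : rcfType) (p : {poly R}) (a c s0 : R) :
  a < s0 -> s0 < c -> 0 <= p.[s0] -> {in `]a, c[, forall x, ~~ root p x} ->
  forall s, a <= s -> s < c -> 0 <= p.[s].
Proof.
move=> a_s0 s0_c p_s0 noroot_ac s a_s s_c; rewrite leNgt; apply/negP => p_s_lt0.
have inside x : a < x -> x < c -> ~~ root p x.
  by move=> ax xc; apply: noroot_ac; rewrite in_itv /= ax xc.
case: (leP s s0) => [s_s0|s0_s].
- have [x] := @polyrcf.poly_ivt _ p s s0 s_s0 (mulr_le0_ge0 (ltW p_s_lt0) p_s0).
  rewrite in_itv /= => /andP [s_x x_s0] x_root.
  have s_lt_x : s < x.
    by rewrite lt_neqAle s_x andbT; apply: contraTneq x_root => <-; rewrite rootE lt_eqF.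
  by have := inside x (le_lt_trans a_s s_lt_x) (le_lt_trans x_s0 s0_c); rewrite x_root.
- have [x] := @polyrcf.poly_ivt _ p s0 s (ltW s0_s) (mulr_ge0_le0 p_s0 (ltW p_s_lt0)).
  rewrite in_itv /= => /andP [s0_x x_s] x_root.
  by have := inside x (lt_le_trans a_s0 s0_x) (le_lt_trans x_s s_c); rewrite x_root.
Qed.

(* One step of the continuation: if the adjugate is nonnegative on
   [c, +oo[ and no adjugate entry vanishes in ]a, c[, then it is nonnegative
   on [a, +oo[.  Nonnegativity first extends to some s0 in ]a, c[ by
   [resolvent_ge0_left], then to all of [a, c[ since no sign can change. *)
Lemma adj_ge0_extend (R : rcfType) m (A : 'M[R]_m) (a c : R) :
  hurwitz A -> 0 <= a -> a < c -> (forall s, c <= s -> adj_ge0 A s) ->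
  {in `]a, c[, forall x, ~~ root (adj_roots_poly A) x} ->
  forall s, a <= s -> adj_ge0 A s.
Proof.
move=> A_hurwitz a_ge0 a_c c_good noroot_ac s a_s.
case: (leP c s) => [/c_good //|s_c].
have c_ge0 : 0 <= c by apply: le_trans a_ge0 (ltW a_c).
have [e e_gt0 left_good] :=
  resolvent_ge0_left ((resolvent_ge0_adjE A_hurwitz c_ge0).2 (c_good c (lexx c))).
set s0 := Num.max ((a + c) / 2) (c - e).
have [a_s0 s0_c ce_s0] : [/\ a < s0, s0 < c & c - e <= s0].
  rewrite /s0 le_max lexx orbT lt_max gt_max; split=> //; first by rewrite ltr_pdivlMr //; lra.
  by apply/andP; split; [rewrite ltr_pdivrMr //|]; lra.
have s0_good : adj_ge0 A s0.
  apply/(resolvent_ge0_adjE A_hurwitz (ltW (le_lt_trans a_ge0 a_s0))).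
  exact: left_good (ltW s0_c).
move=> i j; case: (eqVneq ((\adj (char_poly_mx A)) i j) 0) => [->|q_neq0].
  by rewrite horner0.
apply: (poly_ge0_noroot a_s0 s0_c (s0_good i j)) => // x x_ac.
by apply: contraNN (noroot_ac x x_ac); apply: adj_roots_poly_root.
Qed.

(* For Metzler Hurwitz A the adjugate of x I - A is nonnegative on
   [0, +oo[: start from a large t (resolvent_ge0_large) and move left past
   the finitely many roots of adj_roots_poly, by induction on their number. *)
Lemma adj_ge0_nonneg (R : rcfType) m (A : 'M[R]_m) (t0 : R) :
  metzler A -> hurwitz A -> 0 <= t0 -> adj_ge0 A t0.
Proof.
move=> A_metzler A_hurwitz t0_ge0.
set Q := adj_roots_poly A; have Q_neq0 : Q != 0 := adj_roots_poly_neq0 A.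
set T := 1 + \sum_i \sum_j `|A i j|.
have T_ge1 : 1 <= T by rewrite lerDl; apply: sumr_ge0 => i _; apply: sumr_ge0.
suff extend k c : t0 <= c -> (size (roots Q t0 c) <= k)%N ->
    (forall s, c <= s -> adj_ge0 A s) -> forall s, t0 <= s -> adj_ge0 A s.
  apply: (extend _ (Num.max t0 T)) => //; first by rewrite le_max lexx.
  move=> s Ts; have T_s : T <= s by apply: le_trans Ts; rewrite le_max lexx orbT.
  by apply/(resolvent_ge0_adjE A_hurwitz); [lra|exact: resolvent_ge0_large].
elim: k c => [|k IHk] c t0_c nroots c_good.
all: case: (eqVneq t0 c) => [-> //|t0_neq_c].
all: have t0_lt_c : t0 < c by rewrite lt_neqAle t0_neq_c.
all: case: (prev_rootP Q t0 c) => [Q0|y _ Qy0 y_in noroot_yc|c' _ _ noroot_t0c].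
all: try by rewrite Q0 eqxx in Q_neq0.
all: try by apply: (adj_ge0_extend A_hurwitz t0_ge0 t0_lt_c c_good).
all: have y_roots : y \in roots Q t0 c by
       apply: root_in_roots => //; rewrite rootE Qy0.
  by move: nroots; rewrite leqn0 => /nilP roots0; rewrite roots0 in y_roots.
have [t0_y y_c] : t0 < y /\ y < c by move: y_in; rewrite in_itv /= => /andP.
apply: (IHk y (ltW t0_y)).
  have sub : {subset y :: roots Q t0 y <= roots Q t0 c}.
    move=> x; rewrite inE => /orP [/eqP -> //|x_roots].
    have := roots_in x_roots; rewrite in_itv /= => /andP [t0_x x_y].
    apply: root_in_roots (root_roots x_roots) => //.
    by rewrite in_itv /= t0_x (lt_trans x_y y_c).
  have uniq_y : uniq (y :: roots Q t0 y).
    rewrite /= uniq_roots andbT; apply/negP => /roots_in.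
    by rewrite in_itv /= ltxx andbF.
  by rewrite -ltnS; apply: leq_trans (uniq_leq_size uniq_y sub) nroots.
exact: (adj_ge0_extend A_hurwitz (ltW (le_lt_trans t0_ge0 t0_y)) y_c c_good noroot_yc).
Qed.

(* Metzler + Hurwitz: A is invertible and -A^-1 is entrywise nonnegative
   (the resolvent at t = 0 is (-A)^-1 = -A^-1). *)
Lemma metzler_hurwitz_inv_le0 (R : rcfType) m (A : 'M[R]_m) :
  metzler A -> hurwitz A -> A \in unitmx /\ forall i j, 0 <= - invmx A i j.
Proof.
move=> A_metzler A_hurwitz.
have [negA_unit negA_inv_ge0] := (resolvent_ge0_adjE A_hurwitz (lexx 0)).2
  (adj_ge0_nonneg A_metzler A_hurwitz (lexx 0)).
have negA : 0%:M - A = (-1) *: A by rewrite raddf0 sub0r scaleN1r.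
have A_unit : A \in unitmx by move: negA_unit; rewrite negA unitmxZ // unitrN1.
split=> // i j; have := negA_inv_ge0 i j.
by rewrite negA invmxZ -?negA // invrN1 scaleN1r mxE.
Qed.

(* Moreover the diagonal of -A^-1 is positive: row i of (-A)(-A^-1) = I
   reads (-A_ii)(-A^-1)_ii + (nonpositive terms) = 1. *)
Lemma metzler_hurwitz_inv_diag_gt0 (R : rcfType) m (A : 'M[R]_m) i :
  metzler A -> hurwitz A -> 0 < - invmx A i i.
Proof.
move=> A_metzler A_hurwitz; have [A_unit inv_ge0] := metzler_hurwitz_inv_le0 A_metzler A_hurwitz.
have row_i : \sum_k (- A i k) * (- invmx A k i) = 1.
  have := mulmxV A_unit; move/matrixP/(_ i i); rewrite !mxE eqxx mulr1n => <-.
  by apply: eq_bigr => k _; rewrite mulrNN.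
rewrite lt_neqAle inv_ge0 andbT; apply/negP => /eqP diag0.
move: row_i; rewrite (bigD1 i) //= -diag0 mulr0 add0r => row_i.
have : \sum_(k | k != i) (- A i k) * (- invmx A k i) <= 0.
  apply: sumr_le0 => k k_neq_i; rewrite mulr_le0_ge0 ?inv_ge0 //.
  by rewrite oppr_le0 A_metzler // eq_sym.
by rewrite row_i ler10.
Qed.

Lemma mulmx_evec (R : rcfType) m (M : 'M[R]_m) i j : (M *m evec j) i 0 = M i j.
Proof.
rewrite mxE (bigD1 j) //= mxE eqxx mulr1 big1 ?addr0 // => k k_neq_j.
by rewrite mxE (negPf k_neq_j) mulr0.
Qed.

Lemma quad_pos_root_exists (R : rcfType) (a b c : R) : 0 < a -> 0 < c ->
  exists2 z, 0 < z & a * z ^+ 2 + b * z - c = 0.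
Proof.
move=> a_gt0 c_gt0; set D := b ^+ 2 + 4 * a * c.
have D_ge0 : 0 <= D by rewrite addr_ge0 ?sqr_ge0 // !mulr_ge0 // ltW.
set S := Num.sqrt D; have S_sq : S ^+ 2 = D by rewrite sqr_sqrtr.
have S_ge0 : 0 <= S by rewrite sqrtr_ge0.
have ac_gt0 : 0 < a * c by rewrite mulr_gt0.
exists ((- b + S) / (2 * a)); first by rewrite divr_gt0 //; rewrite /D in S_sq; nra.
have -> : a * ((- b + S) / (2 * a)) ^+ 2 + b * ((- b + S) / (2 * a)) - c
          = (S ^+ 2 - D) / (4 * a) by rewrite /D; field; lra.
by rewrite S_sq subrr mul0r.
Qed.

(* ... and only one: the product of its roots is -c/a < 0. *)
Lemma quad_pos_root_unique (R : realFieldType) (a b c z w : R) : 0 < a -> 0 < c ->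
  0 < z -> 0 < w -> a * z ^+ 2 + b * z - c = 0 -> a * w ^+ 2 + b * w - c = 0 ->
  z = w.
Proof.
move=> a_gt0 c_gt0 z_gt0 w_gt0 z_root w_root.
have : (z - w) * (a * (z + w) + b) = 0.
  by rewrite -[RHS](subrr 0) -{1}z_root -w_root; ring.
move/eqP; rewrite mulf_eq0 => /orP [|] /eqP sum_eq; first by apply/eqP; rewrite -subr_eq0 sum_eq.
have azw_gt0 : 0 < a * z * w by rewrite !mulr_gt0.
have : a * z ^+ 2 + b * z - c = - (a * z * w) - c - z * (- (a * (z + w) + b)) by ring.
by rewrite z_root sum_eq oppr0 mulr0 subr0; lra.
Qed.

(* The substitution w = k / z (k > 0) maps the positive roots of
   a z^2 + b z - c to those of -(c/k) w^2 + b w + a k, because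
   -(c/k) (k/z)^2 + b (k/z) + a k = (k / z^2) (a z^2 + b z - c). *)
Lemma quad_reciprocal_pos_root (R : rcfType) (a b c k : R) :
  0 < a -> 0 < c -> 0 < k ->
  exists z, [/\ 0 < z, a * z ^+ 2 + b * z - c = 0,
    (forall w, 0 < w -> a * w ^+ 2 + b * w - c = 0 -> w = z),
    - (c / k) * (k / z) ^+ 2 + b * (k / z) + a * k = 0 &
    (forall w, 0 < w -> - (c / k) * w ^+ 2 + b * w + a * k = 0 -> w = k / z)].
Proof.
move=> a_gt0 c_gt0 k_gt0; have [z z_gt0 z_root] := quad_pos_root_exists b a_gt0 c_gt0.
have kz_gt0 : 0 < k / z by rewrite divr_gt0.
have kz_root : - (c / k) * (k / z) ^+ 2 + b * (k / z) + a * k = 0.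
  have -> : - (c / k) * (k / z) ^+ 2 + b * (k / z) + a * k
            = k / z ^+ 2 * (a * z ^+ 2 + b * z - c) by field; rewrite !gt_eqF.
  by rewrite z_root mulr0.
exists z; split=> // [w w_gt0 w_root|w w_gt0 w_root].
  exact: quad_pos_root_unique a_gt0 c_gt0 w_gt0 z_gt0 w_root z_root.
have ck_gt0 : 0 < c / k by rewrite divr_gt0.
have ak_gt0 : 0 < a * k by rewrite mulr_gt0.
apply: (quad_pos_root_unique (b := - b) ck_gt0 ak_gt0 w_gt0 kz_gt0).
  by rewrite -[RHS]oppr0 -w_root; ring.
by rewrite -[RHS]oppr0 -kz_root; ring.
Qed.

Section ClosedLoop.
Variables (R : rcfType) (n : nat) (A : 'M[R]_n.+1) (b0 : 'cV[R]_n.+1).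
Variables (mu theta eta ki kp : R).
Hypotheses (A_unit : A \in unitmx) (theta_gt0 : 0 < theta) (eta_gt0 : 0 < eta).

Definition gain (v : 'cV[R]_n.+1) : R := - (invmx A *m v) ord_max 0.

(* The state at which the x-equation balances, once z1 = z is fixed and z2 is
   eliminated through z1 z2 = mu / eta and x_n = mu / theta. *)
Definition eq_state (z : R) : 'cV[R]_n.+1 :=
  - (invmx A *m ((ki * z) *: evec ord0
                 - (kp * (mu / theta) * mu / (eta * z)) *: evec ord_max + b0)).

(* Its output coordinate misses mu / theta by P1(z) / (eta z), which is
   why the positive roots of P1 are the equilibrium values of z1. *)
Lemma eq_state_last (z : R) : 0 < z ->
  eq_state z ord_max 0 - mu / theta =
  (eta * gain (evec ord0) * ki * z ^+ 2 + (gain b0 - mu / theta) * eta * z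
   - gain (evec ord_max) * kp * mu * (mu / theta)) / (eta * z).
Proof.
move=> z_gt0; rewrite /eq_state /gain mulmxDr mulmxBr -!scalemxAr.
move: (invmx A *m _) (invmx A *m _) (invmx A *m b0) => U W Y; rewrite !mxE.
by field; rewrite !gt_eqF.
Qed.

(* With z1 > 0, the equilibrium equations say exactly: z2 is determined by
   z1 (from z1' = 0), x = eq_state z1 (from x' = 0) and x_n = mu / theta
   (from z2' = 0 combined with z1' = 0). *)
Lemma equilibriumP (x : 'cV[R]_n.+1) (z1 z2 : R) : 0 < z1 ->
  is_equilibrium A b0 mu theta eta ki kp x z1 z2 <->
  [/\ z2 = mu / (eta * z1), x = eq_state z1 & x ord_max 0 = mu / theta].
Proof.
move=> z1_gt0; rewrite /is_equilibrium /cl_field; split.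
- case=> x_eq z1_eq z2_eq.
  have z2E : z2 = mu / (eta * z1).
    by rewrite -[mu](subrK (eta * z1 * z2)) z1_eq add0r; field; rewrite !gt_eqF.
  have xnE : x ord_max 0 = mu / theta.
    have : theta * x ord_max 0 = mu by lra.
    by move=> <-; field; rewrite gt_eqF.
  have coefE : kp * x ord_max 0 * z2 = kp * (mu / theta) * mu / (eta * z1).
    by rewrite xnE z2E mulrA.
  have Ax : A *m x = - ((ki * z1) *: evec ord0 - (kp * x ord_max 0 * z2) *: evec ord_max + b0).
    by apply/eqP; rewrite -subr_eq0 opprK; apply/eqP; rewrite -[RHS]x_eq !addrA.
  by split=> //; rewrite /eq_state -coefE -mulmxN -Ax mulKmx.
- case=> -> xE xnE; rewrite xnE.
  have coefE : kp * (mu / theta) * (mu / (eta * z1)) = kp * (mu / theta) * mu / (eta * z1).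
    exact: mulrA.
  rewrite coefE xE /eq_state mulmxN mulKVmx //; congr (_, _, _); first by rewrite -!addrA addNr.
    by field; rewrite !gt_eqF.
  by field; rewrite !gt_eqF.
Qed.

End ClosedLoop.

Theorem mainTheorem1 (R : rcfType) (n : nat) (A : 'M[R]_n.+1) (b0 : 'cV[R]_n.+1)
  (mu theta eta ki kp : R) :
  metzler A -> hurwitz A -> (forall i, 0 <= b0 i 0) ->
  0 < mu -> 0 < theta -> 0 < eta -> 0 < ki -> 0 < kp ->
  let r := mu / theta in
  let g1 := - (invmx A *m evec ord0) ord_max 0 in
  let gn := - (invmx A *m evec ord_max) ord_max 0 in
  let g0 := - (invmx A *m b0) ord_max 0 in
  g1 != 0 ->
  let P1 : {poly R} := (eta * g1 * ki)%:P * 'X^2 + ((g0 - r) * eta)%:P * 'X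
                         - (gn * kp * mu * r)%:P in
  let P2 : {poly R} := (- eta * gn * kp * r)%:P * 'X^2 + ((g0 - r) * eta)%:P * 'X
                         + (g1 * ki * mu)%:P in
  exists z1s : R,
    [/\ 0 < z1s /\ root P1 z1s,
        (forall z, 0 < z -> root P1 z -> z = z1s),
        (forall (x : 'cV[R]_n.+1) (z1 z2 : R), 0 < z1 ->
           is_equilibrium A b0 mu theta eta ki kp x z1 z2 <->
           [/\ z1 = z1s, z2 = mu / (eta * z1s) &
               x = - (invmx A *m ((ki * z1s) *: evec ord0
                        - (kp * r * mu / (eta * z1s)) *: evec ord_max + b0))]),
        (- (invmx A *m ((ki * z1s) *: evec ord0
              - (kp * r * mu / (eta * z1s)) *: evec ord_max + b0))) ord_max 0 = r &
        exists z2s : R,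
          [/\ 0 < z2s, root P2 z2s,
              (forall z, 0 < z -> root P2 z -> z = z2s) &
              z1s = mu / (eta * z2s)]].
Proof.
move=> A_metzler A_hurwitz _ mu_gt0 theta_gt0 eta_gt0 ki_gt0 kp_gt0 r g1 gn g0 g1_neq0 P1 P2.
have [A_unit Ainv_le0] := metzler_hurwitz_inv_le0 A_metzler A_hurwitz.
have g1_gt0 : 0 < g1 by rewrite lt_neqAle eq_sym g1_neq0 /g1 mulmx_evec Ainv_le0.
have gn_gt0 : 0 < gn by rewrite /gn mulmx_evec metzler_hurwitz_inv_diag_gt0.
have a_gt0 : 0 < eta * g1 * ki by rewrite !mulr_gt0.
have c_gt0 : 0 < gn * kp * mu * r by rewrite !mulr_gt0 ?invr_gt0.
have k_gt0 : 0 < mu / eta by rewrite divr_gt0.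
(* P1 and P2 are the reciprocal pair of quadratics with k = mu / eta *)
have [z1s [z1s_gt0 z1s_root P1_uniq z2s_root P2_uniq]] :=
  quad_reciprocal_pos_root ((g0 - r) * eta) a_gt0 c_gt0 k_gt0.
have P1E z : P1.[z] = eta * g1 * ki * z ^+ 2 + (g0 - r) * eta * z - gn * kp * mu * r.
  by rewrite !hornerE.
have P2E w : P2.[w] = - (gn * kp * mu * r / (mu / eta)) * w ^+ 2
                      + (g0 - r) * eta * w + eta * g1 * ki * (mu / eta).
  have -> : P2.[w] = - eta * gn * kp * r * w ^+ 2 + (g0 - r) * eta * w + g1 * ki * mu.
    by rewrite !hornerE.
  by field; rewrite !gt_eqF.
have z2sE : mu / (eta * z1s) = mu / eta / z1s by field; rewrite !gt_eqF.
have P1_root : root P1 z1s by rewrite rootE P1E z1s_root.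
have state_rootE z : 0 < z -> (eq_state A b0 mu theta eta ki kp z ord_max 0 == r) = root P1 z.
  move=> z_gt0; rewrite -subr_eq0 eq_state_last // rootE P1E mulf_eq0 invr_eq0.
  by rewrite mulf_eq0 (gt_eqF eta_gt0) (gt_eqF z_gt0) !orbF.
exists z1s; split=> //.
- by move=> z z_gt0; rewrite rootE P1E => /eqP; apply: P1_uniq.
- move=> x z1 z2 z1_gt0; rewrite equilibriumP //; split.
    case=> z2E xE xnE; have z1E : z1 = z1s.
      by apply: P1_uniq => //; apply/eqP; rewrite -P1E -rootE -state_rootE // -xE xnE.
    by rewrite -z1E.
  by case=> -> -> ->; split=> //; apply/eqP; rewrite state_rootE.
- by apply/eqP; rewrite state_rootE.
exists (mu / (eta * z1s)); rewrite z2sE; split.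
- by rewrite !divr_gt0.
- by rewrite rootE P2E z2s_root.
- by move=> w w_gt0; rewrite rootE P2E => /eqP; apply: P2_uniq.
- by field; rewrite !gt_eqF.
Qed.
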